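(* Let $n\ge1$, $G=\mathbb Z/n\mathbb Z$, $\omega$ a normalized 3-cocycle of $G$ with values in $\mathbb F^\times$, $X,Y$ finite $G$-sets, and let $(F,s):\mathcal M(X,\Psi_X)\to\mathcal M(Y,\Psi_Y)$ be a simple $\mathrm{Vec}_G^\omega$-module functor. Then there is an orbit $\Gamma$ of $X\times Y$ under the diagonal $G$-action such that $m^F_{xy}:=\dim_{\mathbb F}\mathrm{Hom}(F(x),y)$ equals $1$ for $(x,y)\in\Gamma$ and $0$ otherwise.
   Context: $\mathbb F$ is an algebraically closed field. $\mathrm{Vec}_G^\omega$: monoidal category of finite-dimensional $G$-graded $\mathbb F$-vector spaces, simple objects $\delta^g$, $\delta^g\otimes\delta^h=\delta^{gh}$, associator $a_{\delta^g,\delta^h,\delta^k}=\omega(g,h,k)\mathrm{id}$ for a normalized 3-cocycle $\omega$. For a $G$-set $X$ and a normalized $\Psi:G\times G\times X\to\mathbb F^\times$ with $\Psi(h,k,g^{-1}\cdot x)\Psi^{-1}(gh,k,x)\Psi(g,hk,x)\Psi^{-1}(g,h,x)=\omega^{-1}(g,h,k)$, $\mathcal M(X,\Psi)$ is the category of finite-dimensional $X$-graded vector spaces (simple objects $x\in X$) with $\delta^g\triangleright x=g\cdot x$ and module constraint $m_{\delta^g,\delta^h,x}=\Psi(g,h,(gh)\cdot x)\mathrm{id}_{(gh)\cdot x}$. A module functor $(F,s)$ is an $\mathbb F$-linear functor with natural isomorphism $s_{C,M}:F(C\triangleright M)\to C\triangleright F(M)$ satisfying $m'_{C,D,F(M)}\circ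 s_{C\otimes D,M}=(\mathrm{id}_C\triangleright s_{D,M})\circ s_{C,D\triangleright M}\circ F(m_{C,D,M})$; morphisms are natural transformations compatible with $s$. It is simple if it is simple in the abelian category of module functors $\mathcal M(X,\Psi_X)\to\mathcal M(Y,\Psi_Y)$ and their morphisms. *)

From HB Require Import structures.
From mathcomp Require Import all_boot all_algebra.
Set Implicit Arguments. Unset Strict Implicit. Unset Printing Implicit Defensive.
Import GRing.Theory.
Local Open Scope ring_scope.

Record gset (G : zmodType) := GSet {
  gs_T :> finType;
  gs_act : G -> gs_T -> gs_T;
  gs_act0 : forall x, gs_act 0 x = x;
  gs_actD : forall g h x, gs_act (g + h) x = gs_act g (gs_act h x) }.
Arguments gs_act {G} g _ _ : rename.
Arguments gs_actD {G} g _ _ _ : rename.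

Section Defs.
Variables (K : fieldType) (G : zmodType).

Definition normalized_3cocycle (w : G -> G -> G -> K) : Prop :=
  (forall g h k, w g h k != 0) /\
  (forall g h, w 0 g h = 1 /\ w g 0 h = 1 /\ w g h 0 = 1) /\
  (forall g h k l,
      w h k l * w g (h + k) l * w g h k = w (g + h) k l * w g h (k + l)).

Definition module_twist (X : gset G) (w : G -> G -> G -> K)
    (Psi : G -> G -> X -> K) : Prop :=
  (forall g h x, Psi g h x != 0) /\
  (forall h x, Psi 0 h x = 1 /\ Psi h 0 x = 1) /\
  (forall g h k x,
      Psi h k (gs_act X (- g) x) / Psi (g + h) k x * Psi g (h + k) x
        / Psi g h x = (w g h k)^-1).

(* Objects of (a skeleton of) the category of finite-dimensional X-graded
   K-vector spaces: dimension vectors d : X -> nat.  Morphisms: graded linear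
   maps, one matrix per degree (row-vector convention). *)
Definition hom (X : finType) (d d' : X -> nat) := forall x, 'M[K]_(d x, d' x).
Definition hid (X : finType) (d : X -> nat) : hom d d := fun x => 1%:M.
(* hcomp f g = "first f, then g" *)
Definition hcomp (X : finType) (d1 d2 d3 : X -> nat) (f : hom d1 d2)
  (g : hom d2 d3) : hom d1 d3 := fun x => f x *m g x.
Definition hadd (X : finType) (d d' : X -> nat) (f g : hom d d') : hom d d' :=
  fun x => f x + g x.
Definition hscale (X : finType) (d d' : X -> nat) (a : K) (f : hom d d') :
  hom d d' := fun x => a *: f x.

(* delta^g |> - on M(X,Psi): the simple x goes to g.x *)
Definition act_obj (X : gset G) (g : G) (d : X -> nat) : X -> nat :=
  fun x => d (gs_act X (- g) x).
Definition act_hom (X : gset G) (g : G) (d d' : X -> nat) (f : hom d d') :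
  hom (act_obj g d) (act_obj g d') := fun x => f (gs_act X (- g) x).

Lemma act_objD (X : gset G) g h (d : X -> nat) x :
  act_obj (g + h) d x = act_obj g (act_obj h d) x.
Proof. by rewrite /act_obj -gs_actD opprD addrC. Qed.

Definition hcast (X : finType) (d1 d2 : X -> nat) (e : forall x, d1 x = d2 x) :
  hom d1 d2 := fun x => castmx (erefl (d1 x), e x) (1%:M : 'M[K]_(d1 x)).

(* module constraint m_{delta^g,delta^h,M} : (delta^g (x) delta^h) |> M ->
   delta^g |> (delta^h |> M), acting by Psi(g,h,z) on the degree-z part
   (so on a simple x it is Psi(g,h,(gh).x) id_{(gh).x}). *)
Definition mcon (X : gset G) (Psi : G -> G -> X -> K) g h (d : X -> nat) :
  hom (act_obj (g + h) d) (act_obj g (act_obj h d)) :=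
  fun x => Psi g h x *: hcast (@act_objD X g h d) x.

(* K-linear Vec_G^omega-module functors (F,s) : M(X,PX) -> M(Y,PY).
   The structure s is given on the simple objects delta^g of Vec_G^omega
   (naturality in C is then automatic). *)
Record modfun (X Y : gset G) (PX : G -> G -> X -> K) (PY : G -> G -> Y -> K) :=
  ModFun {
  Fo : (X -> nat) -> (Y -> nat);
  Fm : forall d d', hom d d' -> hom (Fo d) (Fo d');
  Fm_id : forall d, Fm (hid d) = hid (Fo d);
  Fm_comp : forall d1 d2 d3 (f : hom d1 d2) (g : hom d2 d3),
      Fm (hcomp f g) = hcomp (Fm f) (Fm g);
  Fm_add : forall d d' (f g : hom d d'), Fm (hadd f g) = hadd (Fm f) (Fm g);
  Fm_scale : forall d d' a (f : hom d d'), Fm (hscale a f) = hscale a (Fm f);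
  Fs : forall g d, hom (Fo (act_obj g d)) (act_obj g (Fo d));
  Fs_iso : forall g d, exists t : hom (act_obj g (Fo d)) (Fo (act_obj g d)),
      hcomp (Fs g d) t = hid _ /\ hcomp t (Fs g d) = hid _;
  Fs_nat : forall g d d' (f : hom d d'),
      hcomp (Fm (act_hom g f)) (Fs g d') = hcomp (Fs g d) (act_hom g (Fm f));
  Fs_mod : forall g h d,
      hcomp (Fs (g + h) d) (mcon PY g h (Fo d)) =
      hcomp (hcomp (Fm (mcon PX g h d)) (Fs g (act_obj h d)))
            (act_hom g (Fs h d)) }.

Section ModFunHom.
Variables (X Y : gset G) (PX : G -> G -> X -> K) (PY : G -> G -> Y -> K).

Record mfhom (F F' : modfun PX PY) := MFHom {
  eta : forall d, hom (Fo F d) (Fo F' d);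
  eta_nat : forall d d' (f : hom d d'),
      hcomp (Fm F f) (eta d') = hcomp (eta d) (Fm F' f);
  eta_mod : forall g d,
      hcomp (eta (act_obj g d)) (Fs F' g d) =
      hcomp (Fs F g d) (act_hom g (eta d)) }.

Definition mf_zero (F : modfun PX PY) : Prop := forall d y, Fo F d y = 0%N.

Definition mf_mono (F' F : modfun PX PY) (e : mfhom F' F) : Prop :=
  forall (F'' : modfun PX PY) (t1 t2 : mfhom F'' F'),
    (forall d, hcomp (eta t1 d) (eta e d) = hcomp (eta t2 d) (eta e d)) ->
    forall d, eta t1 d = eta t2 d.

Definition mf_iso (F' F : modfun PX PY) (e : mfhom F' F) : Prop :=
  exists i : mfhom F F', forall d,
    hcomp (eta e d) (eta i d) = hid _ /\ hcomp (eta i d) (eta e d) = hid _.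

Definition mf_simple (F : modfun PX PY) : Prop :=
  ~ mf_zero F /\
  forall (F' : modfun PX PY) (e : mfhom F' F),
    mf_mono e -> mf_zero F' \/ mf_iso e.

Definition delta (x : X) : X -> nat := fun x' => nat_of_bool (x' == x).

(* m^F_{xy} = dim Hom(F(x), y) = dimension of the y-component of F(x) *)
Definition mult (F : modfun PX PY) (x : X) (y : Y) : nat := Fo F (delta x) y.

End ModFunHom.
End Defs.

From Pilot Require Import Defs.
From HB Require Import structures.
From mathcomp Require Import all_boot all_algebra fingroup cyclic.
From Stdlib Require Import FunctionalExtensionality.
Set Implicit Arguments. Unset Strict Implicit. Unset Printing Implicit Defensive.
Import GRing.Theory FinRing.Theory.
Local Open Scope ring_scope.

(* A family of subspaces S(d)_y of F(d)_y preserved by every F(f) and carried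
   onto itself by the structure maps s is a module subfunctor of F, hence 0 or
   all of F when F is simple.  Pick (x0, y0) with F(x0)_y0 <> 0.  The maps s
   give invertible transfer maps F(x)_y -> F(-a.x)_(-a.y), which compose up to
   the nonzero scalars Psi_Y / Psi_X; on the stabilizer H of (x0, y0) they form
   a projective representation of H on F(x0)_y0.  As H is cyclic and the field
   is algebraically closed, it has an invariant line <w>.  Transporting <w>
   along the orbit of (x0, y0) and generating gives a nonzero stable family,
   hence all of F: F(x)_y is a line on the orbit and zero off it. *)

Section IdMx.
Variable K : fieldType.

(* The identity K^n -> K^m when n = m; unlike [castmx] it takes no proof of
   n = m, which keeps such equalities out of the terms. *)
Definition idmx n m : 'M[K]_(n, m) := \matrix_(i, j) (i == j :> nat)%:R.

Lemma idmx1 n : idmx n n = 1%:M.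
Proof. by apply/matrixP=> i j; rewrite !mxE. Qed.

Lemma idmxM n m p : n = m \/ m = p -> idmx n m *m idmx m p = idmx n p.
Proof. by case=> e; subst; rewrite idmx1 ?mul1mx ?mulmx1. Qed.

Lemma idmxK n m : n = m -> idmx n m *m idmx m n = 1%:M.
Proof. by move=> e; subst; rewrite idmx1 mulmx1. Qed.

Lemma castmx1 n m (e : n = m) : castmx (erefl n, e) (1%:M : 'M[K]_n) = idmx n m.
Proof. by apply/matrixP=> i j; rewrite castmxE !mxE. Qed.

Lemma idmx_natural (T : Type) (D1 D2 : T -> nat) (M : forall t, 'M[K]_(D1 t, D2 t))
    t1 t2 :
  t1 = t2 -> idmx (D1 t1) (D1 t2) *m M t2 = M t1 *m idmx (D2 t1) (D2 t2).
Proof. by move=> e; subst; rewrite !idmx1 mul1mx mulmx1. Qed.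

Lemma flatmx_bool_eq (b : bool) n (A B : 'M[K]_(b, n)) : ~~ b -> A = B.
Proof. by case: b A B => // A B _; apply/matrixP=> -[]. Qed.

Lemma mulmx_thin n p q (A : 'M[K]_(n, p)) (B : 'M_(p, q)) : p = 0%N -> A *m B = 0.
Proof. by move=> e; subst p; rewrite thinmx0 mul0mx. Qed.

Lemma scalar_mx1_eq0 n : (1%:M : 'M[K]_n) = 0 -> n = 0%N.
Proof. by move=> e; have := mxrank1 K n; rewrite e mxrank0. Qed.

Lemma invertible_mx_square n m (A : 'M[K]_(n, m)) (B : 'M_(m, n)) :
  A *m B = 1%:M -> B *m A = 1%:M -> n = m.
Proof.
move=> AB1 BA1; apply/eqP; rewrite eqn_leq.
have := mxrankM_maxl A B; rewrite AB1 mxrank1 => /leq_trans -> //; last exact: rank_leq_col.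
have := mxrankM_maxl B A; rewrite BA1 mxrank1 => /leq_trans -> //; exact: rank_leq_col.
Qed.

End IdMx.

Lemma ord_bool0 (b : bool) (i : 'I_b) : i = 0%N :> nat.
Proof. by case: i; case: b => //= -[]. Qed.

Lemma ord_bool_true (b : bool) (i : 'I_b) : b.
Proof. by case: b i => // -[]. Qed.

Lemma big_ord_bool (R : Type) (idx : R) (op : Monoid.law idx) (b : bool) (hb : b)
    (f : 'I_b -> R) :
  \big[op/idx]_j f j = f (Ordinal (etrans (lt0b b) hb)).
Proof. by case: b hb f => // hb f; rewrite big_ord1; congr (f _); apply: val_inj. Qed.

Section GradedMaps.
Variable K : fieldType.

Lemma hom_ext (T : finType) (d d' : T -> nat) (f g : Defs.hom K d d') :
  (forall x, f x = g x) -> f = g.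
Proof. by move=> e; apply: functional_extensionality_dep. Qed.

Definition hzero (T : finType) (d d' : T -> nat) : Defs.hom K d d' := fun x => 0.

Definition hidmx (T : finType) (d d' : T -> nat) : Defs.hom K d d' :=
  fun x => idmx K (d x) (d' x).

Lemma hsumE (T : finType) (d d' : T -> nat) (I : Type) (r : seq I) (P : pred I)
    (f : I -> Defs.hom K d d') x :
  (\big[@hadd K T d d'/hzero d d']_(i <- r | P i) f i) x = \sum_(i <- r | P i) f i x.
Proof.
elim: r => [|i r IH]; first by rewrite !big_nil.
by rewrite !big_cons; case: (P i); rewrite /hadd IH.
Qed.

Lemma hidmx_comp (T : finType) (d1 d2 d3 : T -> nat) : (forall x, d1 x = d2 x) ->
  hcomp (hidmx d1 d2) (hidmx d2 d3) = hidmx d1 d3.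
Proof. by move=> e; apply: hom_ext => x; rewrite /hcomp /hidmx idmxM //; left. Qed.

Lemma hidmx_id (T : finType) (d : T -> nat) : hidmx d d = hid K d.
Proof. by apply: hom_ext => x; rewrite /hidmx idmx1. Qed.

End GradedMaps.
Arguments hzero {K T} d d' x.

Section GsetFacts.
Variables (G : zmodType) (T : gset G).

Lemma gs_act_inj a : injective (gs_act T a).
Proof.
move=> p q /(congr1 (gs_act T (- a))).
by rewrite -!gs_actD addNr !gs_act0.
Qed.

Lemma gs_actNK a p : gs_act T (- a) (gs_act T a p) = p.
Proof. by rewrite -gs_actD addNr gs_act0. Qed.

Lemma gs_actND a b p : gs_act T (- (a + b)) p = gs_act T (- b) (gs_act T (- a) p).
Proof. by rewrite -gs_actD opprD addrC. Qed.

End GsetFacts.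

Section BasisMaps.
Variables (K : fieldType) (G : zmodType) (X : gset G).

Definition hinj (x : X) (k : nat) (d : X -> nat) : Defs.hom K (delta x) d :=
  fun z => \matrix_(i, j) ((z == x) && (j == k :> nat))%:R.

Definition hproj (x : X) (k : nat) (d : X -> nat) : Defs.hom K d (delta x) :=
  fun z => \matrix_(i, j) ((z == x) && (i == k :> nat))%:R.

Lemma hinj_comp x d d' (k : 'I_(d x)) (f : Defs.hom K d d') :
  hcomp (hinj x k d) f =
  \big[@hadd K X _ _/hzero _ _]_(k' < d' x) hscale (f x k k') (hinj x k' d').
Proof.
apply: hom_ext => z; rewrite hsumE /hcomp.
have [->|nzx] := eqVneq z x; last by apply: flatmx_bool_eq; rewrite /= nzx.
apply/matrixP => i j; rewrite !mxE summxE.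
rewrite (bigD1 k) //= big1 => [|l nlk]; last first.
  by rewrite !mxE eqxx /= (inj_eq val_inj) (negbTE nlk) mul0r.
rewrite !mxE !eqxx mul1r addr0 (bigD1 j) //= big1 => [|l nlj]; last first.
  by rewrite !mxE eqxx /= eq_sym (inj_eq val_inj) (negbTE nlj) mulr0.
by rewrite !mxE !eqxx mulr1 addr0.
Qed.

Lemma hid_decomp d :
  hid K d = \big[@hadd K X _ _/hzero _ _]_(x : X)
              \big[@hadd K X _ _/hzero _ _]_(k < d x) hcomp (hproj x k d) (hinj x k d).
Proof.
apply: hom_ext => z; rewrite hsumE /hid (bigD1 z) //= big1 => [|x nxz]; last first.
  rewrite hsumE big1 // => k _; apply: mulmx_thin.
  by rewrite /delta eq_sym (negbTE nxz).
rewrite hsumE addr0; apply/matrixP => i j; rewrite summxE.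
rewrite (bigD1 i) //= big1 => [|k nki]; last first.
  rewrite !mxE big1 // => l _; rewrite !mxE eqxx /=.
  by rewrite (inj_eq val_inj) eq_sym (negbTE nki) mul0r.
rewrite addr0 !mxE; under eq_bigr do rewrite !mxE.
by rewrite big_const_ord /delta !eqxx /= addr0 mul1r eq_sym.
Qed.

Lemma hinj_delta (x : X) (k : 'I_(delta x x)) : hinj x k (delta x) = hid K (delta x).
Proof.
apply: hom_ext => z; rewrite /hinj /hid.
have [->|nzx] := eqVneq z x; last by apply: flatmx_bool_eq; rewrite /= nzx.
apply/matrixP => i j; rewrite !mxE /= (ord_bool0 j) (ord_bool0 k) eqxx.
by have -> : i == j by apply/eqP/val_inj; rewrite /= !ord_bool0.
Qed.

Lemma hinj_act a x d (k : 'I_(d (gs_act X (- a) x))) :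
  hinj x k (act_obj a d) =
  hcomp (hidmx K (delta x) (act_obj a (delta (gs_act X (- a) x))))
        (act_hom a (hinj (gs_act X (- a) x) k d)).
Proof.
apply: hom_ext => z; rewrite /hcomp /hidmx /act_hom.
have [->|nzx] := eqVneq z x; last by apply: flatmx_bool_eq; rewrite /= nzx.
apply/matrixP => i j; rewrite !mxE (big_ord_bool _ (eqxx _)) !mxE /= ord_bool0 !eqxx.
by rewrite mul1r.
Qed.

End BasisMaps.

Section ModFunBasics.
Variables (K : fieldType) (G : zmodType) (X Y : gset G).
Variables (PX : G -> G -> X -> K) (PY : G -> G -> Y -> K) (F : modfun PX PY).

Lemma Fm1 d y : Fm F (hid K d) y = 1%:M.
Proof. by rewrite Fm_id. Qed.

Lemma FmM d1 d2 d3 (f : Defs.hom K d1 d2) (g : Defs.hom K d2 d3) y :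
  Fm F (hcomp f g) y = Fm F f y *m Fm F g y.
Proof. by rewrite Fm_comp. Qed.

Lemma FmZ d d' a (f : Defs.hom K d d') y : Fm F (hscale a f) y = a *: Fm F f y.
Proof. by rewrite Fm_scale. Qed.

Lemma Fm0 d d' : Fm F (hzero d d') = hzero _ _.
Proof.
have -> : hzero d d' = hscale 0 (hzero d d') :> Defs.hom K d d'.
  by apply: hom_ext => x; rewrite /hscale scale0r.
by rewrite Fm_scale; apply: hom_ext => x; rewrite /hscale scale0r.
Qed.

Lemma Fm_sum d d' (I : Type) (r : seq I) (P : pred I) (f : I -> Defs.hom K d d') :
  Fm F (\big[@hadd K X d d'/hzero d d']_(i <- r | P i) f i) =
  \big[@hadd K Y _ _/hzero _ _]_(i <- r | P i) Fm F (f i).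
Proof.
elim: r => [|i r IH]; first by rewrite !big_nil Fm0.
by rewrite !big_cons; case: (P i); rewrite ?Fm_add IH.
Qed.

Lemma Fs_invertible g d y : exists t,
  Fs F g d y *m t = 1%:M /\ t *m Fs F g d y = 1%:M.
Proof.
have [t [st ts]] := Fs_iso F g d.
by exists (t y); split; [exact (congr1 (fun h => h y) st) | exact (congr1 (fun h => h y) ts)].
Qed.

Lemma Fs_nat_at g d d' (f : Defs.hom K d d') y :
  Fm F (act_hom g f) y *m Fs F g d' y = Fs F g d y *m Fm F f (gs_act Y (- g) y).
Proof. exact (congr1 (fun h => h y) (Fs_nat F g f)). Qed.

Lemma Fs_mod_at g h d y :
  Fs F (g + h) d y *m (PY g h y *: idmx K (Fo F d (gs_act Y (- (g + h)) y))
                                          (Fo F d (gs_act Y (- h) (gs_act Y (- g) y)))) =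
  Fm F (mcon PX g h d) y *m Fs F g (act_obj h d) y *m Fs F h d (gs_act Y (- g) y).
Proof.
have := congr1 (fun f => f y) (Fs_mod F g h d).
by rewrite /hcomp /act_hom {1}/mcon /hcast castmx1.
Qed.

Lemma Fo_eq0 d y : (forall x, mult F x y = 0%N) -> Fo F d y = 0%N.
Proof.
move=> mult0; apply: (@scalar_mx1_eq0 K).
have := congr1 (fun h => Fm F h y) (hid_decomp K d).
rewrite Fm1 => ->; rewrite Fm_sum hsumE big1 // => x _.
rewrite Fm_sum hsumE big1 // => k _.
by rewrite FmM; apply: mulmx_thin; apply: mult0.
Qed.

End ModFunBasics.

Section StableFamily.
Variables (K : fieldType) (G : zmodType) (X Y : gset G).
Variables (PX : G -> G -> X -> K) (PY : G -> G -> Y -> K) (F : modfun PX PY).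
Variable S : forall d y, 'M[K]_(Fo F d y).
Hypothesis S_Fm : forall d d' (f : Defs.hom K d d') y,
  (S d y *m Fm F f y <= S d' y)%MS.
Hypothesis S_Fs : forall g d y,
  (S (act_obj g d) y *m Fs F g d y :=: S d (gs_act Y (- g) y))%MS.

(* The subfunctor has components F'(d)_y := the row space of [S d y], written
   in the basis [sub_base d y]; both matrices are locked so that [mulmxA]
   rewrites do not unfold [row_base] and [pinvmx]. *)
Fact sub_key : unit. Proof. by []. Qed.
Definition sub_base : forall d y, 'M[K]_(\rank (S d y), Fo F d y) :=
  locked_with sub_key (fun d y => row_base (S d y)).
Definition sub_coord : forall d y, 'M[K]_(Fo F d y, \rank (S d y)) :=
  locked_with sub_key (fun d y => pinvmx (sub_base d y)).
Local Notation base := sub_base.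
Local Notation coord := sub_coord.

Lemma base_coord d y : base d y *m coord d y = 1%:M.
Proof. by rewrite /sub_coord /sub_base; case: sub_key; apply/mulmxVp/row_base_free. Qed.

Lemma coord_base d y m (B : 'M_(m, _)) :
  (B <= S d y)%MS -> B *m coord d y *m base d y = B.
Proof.
by rewrite /sub_coord /sub_base; case: sub_key => sB; apply: mulmxKpV; rewrite eq_row_base.
Qed.

Lemma base_sub d y : (base d y <= S d y)%MS.
Proof. by rewrite /sub_base; case: sub_key; rewrite eq_row_base. Qed.

Lemma row_free_base d y : row_free (base d y).
Proof. by rewrite /sub_base; case: sub_key; apply: row_base_free. Qed.

Let S_Fm_sub {d d'} {f : Defs.hom K d d'} {y m} {B : 'M_(m, _)} :
  (B <= S d y)%MS -> (B *m Fm F f y <= S d' y)%MS.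
Proof. by move=> sB; apply: submx_trans (S_Fm f y); apply: submxMr. Qed.

Let S_Fs_sub {g d y m} {B : 'M_(m, _)} :
  (B <= S (act_obj g d) y)%MS -> (B *m Fs F g d y <= S d (gs_act Y (- g) y))%MS.
Proof. by move=> sB; rewrite -(S_Fs g d y); apply: submxMr. Qed.

Definition sub_Fo d y := \rank (S d y).

Definition sub_Fm d d' (f : Defs.hom K d d') : Defs.hom K (sub_Fo d) (sub_Fo d') :=
  fun y => base d y *m Fm F f y *m coord d' y.

Definition sub_Fs g d : Defs.hom K (sub_Fo (act_obj g d)) (act_obj g (sub_Fo d)) :=
  fun y => base (act_obj g d) y *m Fs F g d y *m coord d (gs_act Y (- g) y).

Lemma sub_Fm_id d : sub_Fm (hid K d) = hid K (sub_Fo d).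
Proof. by apply: hom_ext => y; rewrite /sub_Fm Fm1 mulmx1 base_coord. Qed.

Lemma sub_Fm_comp d1 d2 d3 (f : Defs.hom K d1 d2) (g : Defs.hom K d2 d3) :
  sub_Fm (hcomp f g) = hcomp (sub_Fm f) (sub_Fm g).
Proof.
apply: hom_ext => y; rewrite /sub_Fm /hcomp FmM !mulmxA.
by rewrite (coord_base (S_Fm_sub (base_sub _ _))).
Qed.

Lemma sub_Fm_add d d' (f g : Defs.hom K d d') :
  sub_Fm (hadd f g) = hadd (sub_Fm f) (sub_Fm g).
Proof. by apply: hom_ext => y; rewrite /sub_Fm Fm_add /hadd mulmxDr mulmxDl. Qed.

Lemma sub_Fm_scale d d' a (f : Defs.hom K d d') :
  sub_Fm (hscale a f) = hscale a (sub_Fm f).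
Proof.
by apply: hom_ext => y; rewrite /sub_Fm Fm_scale /hscale -scalemxAr -scalemxAl.
Qed.

Lemma sub_Fs_iso g d :
  exists t : Defs.hom K (act_obj g (sub_Fo d)) (sub_Fo (act_obj g d)),
    hcomp (sub_Fs g d) t = hid _ _ /\ hcomp t (sub_Fs g d) = hid _ _.
Proof.
have [t [st ts]] := Fs_iso F g d.
have sty y := congr1 (fun h => h y) st; have tsy y := congr1 (fun h => h y) ts.
rewrite /hcomp /hid /= in sty tsy.
have S_t y m (B : 'M_(m, _)) : (B <= S d (gs_act Y (- g) y))%MS ->
    (B *m t y <= S (act_obj g d) y)%MS.
  move=> sB; rewrite -(S_Fs g d y) in sB.
  by have := submxMr (t y) sB; rewrite -mulmxA sty mulmx1.
exists (fun y => base d (gs_act Y (- g) y) *m t y *m coord (act_obj g d) y).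
split; apply: hom_ext => y; rewrite /hcomp /sub_Fs /hid !mulmxA.
  by rewrite (coord_base (S_Fs_sub (base_sub _ _))) -(mulmxA _ (Fs F g d y)) sty
    mulmx1 base_coord.
by rewrite (coord_base (S_t _ _ _ (base_sub _ _))) -(mulmxA _ (t y)) tsy mulmx1
  base_coord.
Qed.

Lemma sub_Fs_nat g d d' (f : Defs.hom K d d') :
  hcomp (sub_Fm (act_hom g f)) (sub_Fs g d') = hcomp (sub_Fs g d) (act_hom g (sub_Fm f)).
Proof.
apply: hom_ext => y; rewrite /hcomp /sub_Fm /sub_Fs /act_hom !mulmxA.
rewrite (coord_base (S_Fm_sub (base_sub _ _))) -(mulmxA _ _ (Fs F g d' y)).
by rewrite Fs_nat_at !mulmxA (coord_base (S_Fs_sub (base_sub _ _))).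
Qed.

Lemma sub_Fs_mod g h d :
  hcomp (sub_Fs (g + h) d) (mcon PY g h (sub_Fo d)) =
  hcomp (hcomp (sub_Fm (mcon PX g h d)) (sub_Fs g (act_obj h d)))
        (act_hom g (sub_Fs h d)).
Proof.
apply: hom_ext => y.
rewrite /hcomp /sub_Fm /sub_Fs /act_hom {1}/mcon /hcast castmx1 -scalemxAr -!mulmxA.
rewrite -(@idmx_natural _ _ (Fo F d) (fun z => \rank (S d z)) (coord d) _ _
  (gs_actND g h y)).
rewrite !mulmxA scalemxAl scalemxAr -(mulmxA (base _ _) (Fs F _ _ _)) Fs_mod_at !mulmxA.
by rewrite (coord_base (S_Fm_sub (base_sub _ _)))
  (coord_base (S_Fs_sub (S_Fm_sub (base_sub _ _)))).
Qed.

Definition subfun : modfun PX PY :=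
  ModFun sub_Fm_id sub_Fm_comp sub_Fm_add sub_Fm_scale sub_Fs_iso sub_Fs_nat sub_Fs_mod.

Lemma sub_incl_nat d d' (f : Defs.hom K d d') :
  hcomp (Fm subfun f) (base d') = hcomp (base d) (Fm F f).
Proof.
by apply: hom_ext => y; rewrite /hcomp /= /sub_Fm (coord_base (S_Fm_sub (base_sub _ _))).
Qed.

Lemma sub_incl_mod g d :
  hcomp (base (act_obj g d)) (Fs F g d) = hcomp (Fs subfun g d) (act_hom g (base d)).
Proof.
apply: hom_ext => y; rewrite /hcomp /= /sub_Fs /act_hom.
by rewrite (coord_base (S_Fs_sub (base_sub _ _))).
Qed.

Definition sub_incl : mfhom subfun F := MFHom sub_incl_nat sub_incl_mod.

Lemma sub_incl_mono : mf_mono sub_incl.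
Proof.
move=> F' t1 t2 t12 d; apply: hom_ext => y.
apply: (row_free_inj (row_free_base d y)); exact (congr1 (fun h => h y) (t12 d)).
Qed.

Lemma simple_stable_family : mf_simple F ->
  (forall d y, \rank (S d y) = 0%N) \/ (forall d y, \rank (S d y) = Fo F d y).
Proof.
case=> _ /(_ subfun sub_incl sub_incl_mono) [sub0 | [i sub_iso]]; [left | right] => d y.
  exact: sub0.
apply/eqP; rewrite eqn_leq rank_leq_col -{1}(mxrank1 K (Fo F d y)).
have <- : Defs.eta i d y *m base d y = 1%:M by exact (congr1 (fun h => h y) (sub_iso d).2).
exact: leq_trans (mxrankM_maxr _ _) (rank_leq_row _).
Qed.

End StableFamily.

Section Transfer.
Variables (K : fieldType) (G : zmodType) (X Y : gset G).
Variables (PX : G -> G -> X -> K) (PY : G -> G -> Y -> K) (F : modfun PX PY).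

(* For z = -a.x, the degree-y part of F(x) = F(a |> z) -> a |> F(z). *)
Fact transfer_key : unit. Proof. by []. Qed.
Definition transfer : forall (a : G) (x z : X) (y : Y),
    'M[K]_(Fo F (delta x) y, Fo F (delta z) (gs_act Y (- a) y)) :=
  locked_with transfer_key (fun a x z y =>
    Fm F (hidmx K (delta x) (act_obj a (delta z))) y *m Fs F a (delta z) y).

Lemma transferE a x z y : transfer a x z y =
  Fm F (hidmx K (delta x) (act_obj a (delta z))) y *m Fs F a (delta z) y.
Proof. by rewrite /transfer; case: transfer_key. Qed.

Lemma delta_act a x z : z = gs_act X (- a) x ->
  forall v, delta x v = act_obj a (delta z) v.
Proof. by move=> -> v; rewrite /act_obj /delta (inj_eq (@gs_act_inj _ X _)). Qed.

Lemma transfer_invertible a x z y : z = gs_act X (- a) x ->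
  exists t, transfer a x z y *m t = 1%:M /\ t *m transfer a x z y = 1%:M.
Proof.
move=> /delta_act e; have [t [st ts]] := Fs_invertible F a (delta z) y.
exists (t *m Fm F (hidmx K (act_obj a (delta z)) (delta x)) y).
rewrite !transferE; split.
  by rewrite -!mulmxA (mulmxA (Fs F a _ y)) st mul1mx -FmM hidmx_comp // hidmx_id Fm1.
rewrite -!mulmxA (mulmxA (Fm F _ y)) -FmM hidmx_comp; last by move=> v; rewrite e.
by rewrite hidmx_id Fm1 mul1mx ts.
Qed.

Lemma Fo_delta_transfer a x y :
  Fo F (delta x) y = Fo F (delta (gs_act X (- a) x)) (gs_act Y (- a) y).
Proof.
have [t [st ts]] := transfer_invertible y (erefl (gs_act X (- a) x)).
exact: invertible_mx_square st ts.
Qed.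

Lemma mult_act g x y : mult F (gs_act X g x) (gs_act Y g y) = mult F x y.
Proof. by rewrite /mult (Fo_delta_transfer g) !gs_actNK. Qed.

Lemma hidmx_mcon a b x z : z = gs_act X (- b) (gs_act X (- a) x) ->
  hcomp (hidmx K (delta x) (act_obj (a + b) (delta z))) (mcon PX a b (delta z)) =
  hscale (PX a b x) (hidmx K (delta x) (act_obj a (act_obj b (delta z)))).
Proof.
move=> ez; apply: hom_ext => v; rewrite /hcomp /hidmx /mcon /hcast /hscale castmx1.
have [->|nvx] := eqVneq v x; last by apply: flatmx_bool_eq; rewrite /= nvx.
rewrite -scalemxAr idmxM //; left.
by rewrite /act_obj /delta ez gs_actND !eqxx.
Qed.

Lemma transfer_comp a b x z1 z2 y :
  z1 = gs_act X (- a) x -> z2 = gs_act X (- b) z1 -> PX a b x != 0 ->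
  transfer a x z1 y *m transfer b z1 z2 (gs_act Y (- a) y) =
  (PY a b y / PX a b x) *: (transfer (a + b) x z2 y *m
     idmx K (Fo F (delta z2) (gs_act Y (- (a + b)) y))
            (Fo F (delta z2) (gs_act Y (- b) (gs_act Y (- a) y)))).
Proof.
move=> e1 e2 PXn0; apply: (scalerI PXn0).
rewrite scalerA mulrCA mulfV // mulr1.
rewrite !transferE !mulmxA -(mulmxA _ (Fs F a _ y)) -Fs_nat_at mulmxA -FmM.
rewrite hidmx_comp; last exact: delta_act.
rewrite !scalemxAl -FmZ -hidmx_mcon; last by rewrite e2 e1.
rewrite FmM -!mulmxA (mulmxA (Fm F (mcon _ _ _ _) y)) -Fs_mod_at.
by rewrite -!scalemxAr -scalemxAl.
Qed.

Lemma Fm_hinj_transfer a x d y (k : 'I_(d (gs_act X (- a) x))) :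
  Fm F (hinj K x k (act_obj a d)) y *m Fs F a d y =
  transfer a x (gs_act X (- a) x) y *m
    Fm F (hinj K (gs_act X (- a) x) k d) (gs_act Y (- a) y).
Proof. by rewrite hinj_act FmM transferE -!mulmxA Fs_nat_at. Qed.

End Transfer.

Section GeneratedFamily.
Variables (K : fieldType) (G : zmodType) (X Y : gset G).
Variables (PX : G -> G -> X -> K) (PY : G -> G -> Y -> K) (F : modfun PX PY).
Variable L : forall x y, 'M[K]_(Fo F (delta x) y).

Definition gen_family d y : 'M[K]_(Fo F d y) :=
  (\sum_(x : X) \sum_(k < d x) <<L x y *m Fm F (hinj K x k d) y>>)%MS.

Lemma gen_family_Fm d d' (f : Defs.hom K d d') y :
  (gen_family d y *m Fm F f y <= gen_family d' y)%MS.
Proof.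
rewrite /gen_family sumsmxMr_gen; apply/sumsmx_subP => x _.
rewrite genmxE sumsmxMr_gen; apply/sumsmx_subP => k _; rewrite genmxE.
rewrite (eqmxMr _ (genmxE _)) -mulmxA -FmM hinj_comp Fm_sum hsumE mulmx_sumr.
apply: summx_sub => k' _; rewrite FmZ -scalemxAr; apply: scalemx_sub.
by apply: (sumsmx_sup x) => //; apply: (sumsmx_sup k') => //; rewrite genmxE.
Qed.

Lemma gen_family_delta x y : (gen_family (delta x) y :=: L x y)%MS.
Proof.
rewrite /gen_family (bigD1 x) //= [X in (_ + X)%MS]big1 => [|x' x'x]; last first.
  by apply: big1 => k _; have := ord_bool_true k; rewrite (negbTE x'x).
apply: eqmx_trans (addsmx0 _ _) _.
by rewrite (big_ord_bool _ (eqxx x)) hinj_delta Fm1 mulmx1; apply: genmxE.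
Qed.

Hypothesis L_transfer : forall a x y,
  (L x y *m transfer F a x (gs_act X (- a) x) y :=:
   L (gs_act X (- a) x) (gs_act Y (- a) y))%MS.

Lemma gen_family_Fs g d y :
  (gen_family (act_obj g d) y *m Fs F g d y :=: gen_family d (gs_act Y (- g) y))%MS.
Proof.
rewrite /gen_family; apply: eqmx_trans (sumsmxMr_gen _ _ _) _.
rewrite [X in (_ :=: X)%MS](reindex_inj (@gs_act_inj _ X (- g))).
apply: eqmx_sums => x _; apply: eqmx_trans (genmxE _) _.
apply: eqmx_trans (sumsmxMr_gen _ _ _) _; apply: eqmx_sums => k _.
apply: eqmx_trans (genmxE _) _; apply: eqmx_trans _ (eqmx_sym (genmxE _)).
apply: eqmx_trans (eqmxMr _ (genmxE _)) _.
by rewrite -mulmxA Fm_hinj_transfer mulmxA; apply: eqmxMr.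
Qed.

End GeneratedFamily.

Section Stabilizer.
Variables (G : finZmodType) (X Y : gset G) (x0 : X) (y0 : Y).

Definition stabilizer : {set G} :=
  [set a | (gs_act X a x0 == x0) && (gs_act Y a y0 == y0)].

Lemma group_set_stabilizer : group_set stabilizer.
Proof.
apply/group_setP; split=> [|a b]; rewrite !inE ?zmod1gE ?gs_act0 ?eqxx //.
case/andP=> /eqP xa /eqP ya /andP [/eqP xb /eqP yb].
by rewrite zmodMgE !gs_actD xb yb xa ya !eqxx.
Qed.

Canonical stabilizer_group := group group_set_stabilizer.

Lemma stabilizerN a :
  (- a \in stabilizer) = (gs_act X (- a) x0 == x0) && (gs_act Y (- a) y0 == y0).
Proof. by rewrite inE. Qed.

Lemma stabilizer_actN a :
  a \in stabilizer -> gs_act X (- a) x0 = x0 /\ gs_act Y (- a) y0 = y0.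
Proof.
by rewrite -[a \in _]groupV zmodVgE stabilizerN => /andP [/eqP -> /eqP ->].
Qed.

End Stabilizer.

Section OrbitLines.
Variables (K : fieldType) (G : finZmodType) (X Y : gset G).
Variables (PX : G -> G -> X -> K) (PY : G -> G -> Y -> K) (F : modfun PX PY).
Hypothesis PX_neq0 : forall g h x, PX g h x != 0.
Hypothesis PY_neq0 : forall g h y, PY g h y != 0.
Variables (x0 : X) (y0 : Y) (w : 'rV[K]_(Fo F (delta x0) y0)).

Let twist_neq0 a b : PY a b y0 / PX a b x0 != 0.
Proof. by rewrite mulf_neq0 ?invr_eq0. Qed.

(* The translates of the line <w> to (x, y); [idmx] identifies the degrees
   -a.y0 and y, which are equal on the summation range. *)
Definition orbit_lines x y : 'M[K]_(Fo F (delta x) y) :=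
  (\sum_(a | (gs_act X (- a) x0 == x) && (gs_act Y (- a) y0 == y))
     <<w *m transfer F a x0 x y0 *m
       idmx K (Fo F (delta x) (gs_act Y (- a) y0)) (Fo F (delta x) y)>>)%MS.

Lemma orbit_lines_transfer b x y :
  (orbit_lines x y *m transfer F b x (gs_act X (- b) x) y :=:
   orbit_lines (gs_act X (- b) x) (gs_act Y (- b) y))%MS.
Proof.
rewrite /orbit_lines; apply: eqmx_trans (sumsmxMr_gen _ _ _) _.
rewrite [X in (_ :=: X)%MS](reindex_inj (addIr b)) /=.
rewrite [X in (_ :=: X)%MS](eq_bigl (fun a =>
    (gs_act X (- a) x0 == x) && (gs_act Y (- a) y0 == y))); last first.
  by move=> a; rewrite !gs_actND !(inj_eq (@gs_act_inj _ _ _)).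
apply: eqmx_sums => a /andP [/eqP ax /eqP ay].
apply: eqmx_trans (genmxE _) _; apply: eqmx_trans _ (eqmx_sym (genmxE _)).
apply: eqmx_trans (eqmxMr _ (genmxE _)) _.
rewrite -!mulmxA (idmx_natural (transfer F b x (gs_act X (- b) x)) ay) !mulmxA.
rewrite -(mulmxA w) (transfer_comp _ _ (esym ax) (erefl _) (PX_neq0 _ _ _)).
rewrite -scalemxAr -scalemxAl; apply: eqmx_trans (eqmx_scale _ (twist_neq0 _ _)) _.
by rewrite -!mulmxA idmxM // ay; right.
Qed.

Definition stab_rep a : 'M[K]_(Fo F (delta x0) y0) :=
  transfer F a x0 x0 y0 *m
    idmx K (Fo F (delta x0) (gs_act Y (- a) y0)) (Fo F (delta x0) y0).

Lemma stab_repM a b : a \in stabilizer x0 y0 -> b \in stabilizer x0 y0 ->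
  stab_rep a *m stab_rep b = (PY a b y0 / PX a b x0) *: stab_rep (a + b).
Proof.
move=> /stabilizer_actN [xa ya] /stabilizer_actN [xb yb].
rewrite /stab_rep mulmxA -(mulmxA (transfer F a _ _ _)).
rewrite (idmx_natural (transfer F b x0 x0) ya) !mulmxA.
rewrite (transfer_comp _ _ (esym xa) (esym xb) (PX_neq0 _ _ _)).
rewrite -!scalemxAl -!mulmxA idmxM; last by left; rewrite ya.
by rewrite idmxM //; right; rewrite ya yb.
Qed.

Lemma stab_rep_invertible a : a \in stabilizer x0 y0 ->
  exists t, stab_rep a *m t = 1%:M /\ t *m stab_rep a = 1%:M.
Proof.
move=> /stabilizer_actN [xa ya].
have [t [st ts]] := transfer_invertible F y0 (esym xa).
exists (idmx K _ _ *m t); rewrite /stab_rep; split.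
  by rewrite -mulmxA (mulmxA (idmx K _ _)) idmxK ?ya // mul1mx st.
by rewrite mulmxA -(mulmxA _ t) ts mulmx1 idmxK ?ya.
Qed.

Lemma stab_rep0 : stab_rep 0 = (PY 0 0 y0 / PX 0 0 x0) *: 1%:M.
Proof.
have H0 : (0 : G) \in stabilizer x0 y0 := group1 _.
have [t [st _]] := stab_rep_invertible H0.
have := congr1 (mulmx^~ t) (stab_repM H0 H0).
by rewrite addr0 -mulmxA st mulmx1 -scalemxAl st.
Qed.

Section CyclicStabilizer.
Variables (k : G) (lam : K).
Hypothesis stabilizer_cycle : stabilizer x0 y0 = <[k]>%g.
Hypothesis w_eigen : w *m stab_rep k = lam *: w.

Lemma stab_rep_line a : a \in stabilizer x0 y0 -> (w *m stab_rep a <= w)%MS.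
Proof.
rewrite stabilizer_cycle => /cycleP [j ->]; rewrite zmodXgE.
have kH : k \in stabilizer x0 y0 by rewrite stabilizer_cycle cycle_id.
have kjH i : k *+ i \in stabilizer x0 y0 by rewrite stabilizer_cycle -zmodXgE mem_cycle.
elim: j => [|j IH]; first by rewrite mulr0n stab_rep0 -scalemxAr mulmx1 scalemx_sub.
have -> : stab_rep (k *+ j.+1) =
    (PY k (k *+ j) y0 / PX k (k *+ j) x0)^-1 *: (stab_rep k *m stab_rep (k *+ j)).
  by rewrite stab_repM // scalerA mulVf ?scale1r -?mulrS.
by rewrite -scalemxAr mulmxA w_eigen -scalemxAl !scalemx_sub.
Qed.

Lemma orbit_lines_base : (orbit_lines x0 y0 :=: w)%MS.
Proof.
apply/eqmxP; rewrite andbC; apply/andP; split.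
  have w0 : (w *m stab_rep 0 <= orbit_lines x0 y0)%MS.
    by apply: (sumsmx_sup 0); rewrite ?oppr0 ?gs_act0 ?eqxx // genmxE mulmxA.
  by rewrite stab_rep0 -scalemxAr mulmx1 (eqmx_scale _ (twist_neq0 0 0)) in w0.
apply/sumsmx_subP => a aH; rewrite genmxE -mulmxA; apply: stab_rep_line.
by rewrite -groupV zmodVgE stabilizerN.
Qed.

End CyclicStabilizer.
End OrbitLines.

Lemma closed_eigenvector (K : closedFieldType) n (A : 'M[K]_n) : (0 < n)%N ->
  exists lam, exists2 v : 'rV_n, v != 0 & v *m A = lam *: v.
Proof.
move=> n_gt0; have /closed_rootP [lam] : size (char_poly A) != 1%N.
  by rewrite size_char_poly; case: n A n_gt0.
by rewrite -eigenvalue_root_char => /eigenvalueP [v vA v0]; exists lam, v.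
Qed.

Section SimpleModFun.
Variables (K : closedFieldType) (G : finZmodType) (X Y : gset G).
Variables (PX : G -> G -> X -> K) (PY : G -> G -> Y -> K) (F : modfun PX PY).
Hypothesis PX_neq0 : forall g h x, PX g h x != 0.
Hypothesis PY_neq0 : forall g h y, PY g h y != 0.
Hypothesis F_simple : mf_simple F.

Lemma exists_mult_gt0 : exists x0 y0, (0 < mult F x0 y0)%N.
Proof.
have [/existsP [x0 /existsP [y0 m0]] | none] :=
  boolP [exists x0, exists y0, (0 < mult F x0 y0)%N]; first by exists x0, y0.
exfalso; apply: F_simple.1 => d y; apply: Fo_eq0 => x; apply/eqP.
rewrite -leqn0 leqNgt; apply: contra none => m0.
by apply/existsP; exists x; apply/existsP; exists y.
Qed.

Hypothesis stabilizer_cyclic : forall (x : X) (y : Y), cyclic (stabilizer x y).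

Theorem simple_modfun_mult : exists x0 y0, forall x y,
  mult F x y =
    (if [exists g, (x == gs_act X g x0) && (y == gs_act Y g y0)] then 1 else 0)%N.
Proof.
have [x0 [y0 m0]] := exists_mult_gt0.
have [k Hk] := cyclicP (stabilizer_cyclic x0 y0).
have [lam [w w0 w_eigen]] := closed_eigenvector (stab_rep F x0 y0 k) m0.
have base_line := orbit_lines_base PX_neq0 PY_neq0 Hk w_eigen.
have [S0 | S_full] := simple_stable_family (gen_family_Fm (orbit_lines w))
  (gen_family_Fs (orbit_lines_transfer PX_neq0 PY_neq0 w)) F_simple.
  have := S0 (delta x0) y0.
  by rewrite gen_family_delta base_line rank_rV w0.
have mult_rank x y : mult F x y = \rank (orbit_lines w x y).
  by rewrite -(gen_family_delta (orbit_lines w)) S_full.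
exists x0, y0 => x y; case: ifP => [/existsP [g /andP [/eqP -> /eqP ->]] | /negbT off].
  by rewrite mult_act mult_rank base_line rank_rV w0.
rewrite mult_rank /orbit_lines big_pred0 ?mxrank0 // => a; apply/negbTE.
apply: contra off => /andP [/eqP <- /eqP <-].
by apply/existsP; exists (- a); rewrite !eqxx.
Qed.

End SimpleModFun.

Unset Implicit Arguments. Set Strict Implicit. Set Printing Implicit Defensive.

Theorem lemma5p20 (K : closedFieldType) (m : nat)
  (w : 'I_m.+1 -> 'I_m.+1 -> 'I_m.+1 -> K)
  (X Y : gset 'I_m.+1)
  (PX : 'I_m.+1 -> 'I_m.+1 -> X -> K) (PY : 'I_m.+1 -> 'I_m.+1 -> Y -> K)
  (hw : normalized_3cocycle w)
  (hX : module_twist w PX) (hY : module_twist w PY)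
  (F : modfun PX PY) (hF : mf_simple F) :
  exists (x0 : X) (y0 : Y), forall (x : X) (y : Y),
    mult F x y =
      (if [exists g : 'I_m.+1, (x == gs_act X g x0) && (y == gs_act Y g y0)]
       then 1 else 0)%N.
Proof.
have Zp_cyclic : cyclic [set: 'I_m.+1] by rewrite Zp_cycle cycle_cyclic.
exact: simple_modfun_mult hX.1 hY.1 hF (fun x y => cyclicS (subsetT _) Zp_cyclic).
Qed.
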